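(* Let $\Delta$ be an isosceles triangle with side lengths $(2,2,1)$, and let $\rho_\diamond=\rho(\tfrac12,\sqrt3)$. Then $\Delta$ can be domed if and only if $\rho_\diamond$ can be domed.
   Context: Closed polygons with integer side lengths are regarded as closed polygons with unit edges by subdividing each side of length $k$ into $k$ collinear unit segments (so $\Delta$ has $5$ unit edges). A unit rhombus $\rho(a,b)$ is a closed polygon $[v_1v_2v_3v_4]$ in $\mathbb{R}^3$ with four sides of length $1$ and $|v_1v_3|=a$, $|v_2v_4|=b$. A closed polygon with unit edges can be domed if there is a finite connected 2-dimensional simplicial complex which is a compact surface with a single boundary cycle, with a map to $\mathbb{R}^3$ linear on simplices sending each triangle to a unit equilateral triangle and the boundary cycle onto the polygon vertex by vertex in cyclic order. *)

From HB Require Import structures.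
From mathcomp Require Import all_boot all_order all_algebra.
From mathcomp Require Import reals.
Set Implicit Arguments. Unset Strict Implicit. Unset Printing Implicit Defensive.
Import Order.TTheory GRing.Theory Num.Theory.
Local Open Scope ring_scope.

Section Domes.
Variable R : realType.

Definition sqdist (u v : 'rV[R]_3) : R := \sum_(i < 3) (u 0 i - v 0 i) ^+ 2.

Definition unit_polygon (n : nat) (p : 'I_n -> 'rV[R]_3) : Prop :=
  forall i : 'I_n, sqdist (p i) (p (ordS i)) = 1.

(* Abstract finite pure 2-dimensional simplicial complex on a finite vertex
   type V given by its set of triangles T. *)
Definition is_edge (V : finType) (T : {set {set V}}) (e : {set V}) : bool :=
  (#|e| == 2)%N && [exists t in T, e \subset t].

Definition ntri (V : finType) (T : {set {set V}}) (e : {set V}) : nat :=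
  #|[set t in T | e \subset t]|.

Definition link_rel (V : finType) (T : {set {set V}}) (v : V) : rel V :=
  fun a b => [set v; a; b] \in T.

Definition in_link (V : finType) (T : {set {set V}}) (v a : V) : bool :=
  (a != v) && [exists t in T, (v \in t) && (a \in t)].

Definition skel_rel (V : finType) (T : {set {set V}}) : rel V :=
  fun a b => [exists t in T, (a \in t) && (b \in t)].

(* The complex is a compact connected surface whose boundary is a single
   cycle, enumerated (injectively, in cyclic order) by w. *)
Definition surface_with_boundary_cycle (V : finType) (T : {set {set V}})
    (n : nat) (w : 'I_n -> V) : Prop :=
  [/\
      (forall t, t \in T -> #|t| = 3%N),
      (forall v : V, exists2 t, t \in T & v \in t),
      (forall u v : V, connect (skel_rel T) u v),
      (* surface: every edge lies in one or two triangles, and the link of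
         each vertex is connected (hence an arc or a circle) *)
      (forall e, is_edge T e -> ntri T e = 1%N \/ ntri T e = 2%N) &
      ((forall v a b : V, in_link T v a -> in_link T v b ->
          connect (link_rel T v) a b) /\
      injective w /\
      (forall e, (is_edge T e && (ntri T e == 1%N)) <->
                 exists i : 'I_n, e = [set w i; w (ordS i)]))].

Definition domeable (n : nat) (p : 'I_n -> 'rV[R]_3) : Prop :=
  exists (V : finType) (T : {set {set V}}) (f : V -> 'rV[R]_3) (w : 'I_n -> V),
    [/\ surface_with_boundary_cycle T w,
        (forall t a b, t \in T -> a \in t -> b \in t -> a != b ->
           sqdist (f a) (f b) = 1) &
        (forall i : 'I_n, f (w i) = p i)].

(* The (2,2,1) isosceles triangle A B C, |AB| = |BC| = 2, |CA| = 1,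
   subdivided into 5 unit edges: [A, (A+B)/2, B, (B+C)/2, C]. *)
Definition triangle221 (p : 'I_5 -> 'rV[R]_3) : Prop :=
  exists A B C : 'rV[R]_3,
    [/\ sqdist A B = 4, sqdist B C = 4, sqdist C A = 1 &
        p = (fun i : 'I_5 => match val i with
                             | 0 => A
                             | 1 => 2^-1 *: (A + B)
                             | 2 => B
                             | 3 => 2^-1 *: (B + C)
                             | _ => C
                             end)].

(* A unit rhombus rho(a,b) = [v1 v2 v3 v4]: unit sides, |v1v3| = a, |v2v4| = b
   (here 0-indexed: q_0 q_1 q_2 q_3). *)
Definition unit_rhombus (a b : R) (q : 'I_4 -> 'rV[R]_3) : Prop :=
  [/\ unit_polygon q,
      sqdist (q (inord 0)) (q (inord 2)) = a ^+ 2 &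
      sqdist (q (inord 1)) (q (inord 3)) = b ^+ 2].

End Domes.

(* Let A B C be the triangle, M1 and M2 the midpoints of AB and BC, and X a point off the
   plane with |XA| = |XC| = 1 and |XB| = sqrt 3.  Then |XM1| = |XM2| = 1 and M1 B M2 X is a
   copy of the rhombus: coning X over the boundary path M2 C A M1 of a dome of the triangle
   gives a dome of the rhombus.  Conversely, for the rhombus q0 q1 q2 q3 the reflections
   A' = 2 q0 - q1 and C' = 2 q2 - q1 make A' q0 q1 q2 C' a copy of the triangle, and the unit
   triangles q3 A' q0, q3 C' A', q2 q3 C' glued to a dome of the rhombus give a dome of it.
   In both directions a rigid motion finishes the proof: four points in general position
   are determined up to congruence by their pairwise distances, because their Gram matrix is
   invertible. *)

From HB Require Import structures.
From mathcomp Require Import all_boot all_order all_algebra.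
From mathcomp Require Import reals.
From mathcomp Require Import ring lra.
Set Implicit Arguments. Unset Strict Implicit. Unset Printing Implicit Defensive.
Import Order.TTheory GRing.Theory Num.Theory.

Section Surfaces.
Variable V : finType.
Implicit Types (T : {set {set V}}) (s r : seq V) (e t : {set V}) (a b c u v w x y : V).

Lemma cards3_distinct u v w : u != v -> v != w -> u != w -> #|[set u; v; w]| = 3.
Proof. by move=> uv vw uw; rewrite setUC cardsU1 cards2 !inE negb_or eq_sym uw eq_sym vw uv. Qed.

Lemma set3_of_card3 t x a b : #|t| = 3 -> x \in t -> a \in t -> b \in t ->
  a != x -> b != x -> a != b -> [set x; a; b] = t.
Proof.
move=> t3 xt at_ bt ax bx ab; apply/eqP.
rewrite eqEcard t3 cards3_distinct 1?(eq_sym x) // andbT.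
by apply/subsetP => z; rewrite !inE => /orP[/orP[]|] /eqP->.
Qed.

Lemma sub_set3_card2 u v w e : e \subset [set u; v; w] -> #|e| = 2 ->
  [\/ e = [set u; v], e = [set v; w] | e = [set u; w]].
Proof.
move=> sub /eqP/cards2P[a [b [ab ee]]]; subst e.
have := subsetP sub b (set22 a b); have := subsetP sub a (set21 a b).
rewrite !inE => /orP[/orP[]|]/eqP ea /orP[/orP[]|]/eqP eb; subst a b;
  rewrite ?eqxx // in ab;
  first [by constructor 1 | by constructor 2 | by constructor 3
        | rewrite setUC; first [by constructor 1 | by constructor 2 | by constructor 3]].
Qed.

Fixpoint path_edges x s : seq {set V} :=
  if s is y :: s' then [set x; y] :: path_edges y s' else [::].

Definition cycle_edges s : seq {set V} := [seq [set xy.1; xy.2] | xy <- zip s (rot 1 s)].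

Lemma cycle_edges_cons x s : cycle_edges (x :: s) = path_edges x (rcons s x).
Proof.
rewrite /cycle_edges rot1_cons; move: {1 3}x.
by elim: s => [|y s IH] a //=; rewrite IH.
Qed.

Lemma mem_path_edges x s e y : e \in path_edges x s -> y \in e -> y \in x :: s.
Proof.
elim: s x => [|z s IH] x //=; rewrite inE => /orP[/eqP-> | /IH h /h yzs].
  by rewrite !inE => /orP[]->; rewrite ?orbT.
by rewrite inE yzs orbT.
Qed.

Lemma zip_rot (A B : Type) k (s : seq A) (t : seq B) : size s = size t ->
  zip (rot k s) (rot k t) = rot k (zip s t).
Proof.
move=> st; rewrite -[RHS]zip_unzip; congr zip.
  by rewrite /unzip1 map_rot -/(unzip1 _) unzip1_zip ?st.
by rewrite /unzip2 map_rot -/(unzip2 _) unzip2_zip ?st.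
Qed.

Lemma cycle_edge_first x y s : [set x; y] \in cycle_edges [:: x, y & s].
Proof. by rewrite cycle_edges_cons inE eqxx. Qed.

Lemma cycle_edges_rot k s : cycle_edges (rot k s) =i cycle_edges s.
Proof. by move=> e; rewrite /cycle_edges rot_rot zip_rot ?size_rot // map_rot mem_rot. Qed.

Definition links_connected T : Prop :=
  forall x a b, in_link T x a -> in_link T x b -> connect (link_rel T x) a b.

Definition edges_in_one_or_two T : Prop :=
  forall e, is_edge T e -> ntri T e = 1 \/ ntri T e = 2.

Definition boundary_edge T e : bool := is_edge T e && (ntri T e == 1).

(* [surface_with_boundary_cycle] with the boundary cycle given as a sequence, so that it can
   be rotated and extended. *)
Definition surface_bounded_by T s : Prop :=
  [/\ (forall t, t \in T -> #|t| = 3), (forall x, exists2 t, t \in T & x \in t),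
      (forall a b, connect (skel_rel T) a b), edges_in_one_or_two T &
      [/\ links_connected T, uniq s, 2 < size s &
          forall e, boundary_edge T e <-> e \in cycle_edges s]].

Lemma surface_bounded_by_rot T s k : surface_bounded_by T s -> surface_bounded_by T (rot k s).
Proof.
case=> h1 h2 h3 h4 [h5 h6 h7 h8]; split=> //; split=> //.
- by rewrite rot_uniq.
- by rewrite size_rot.
- by move=> e; rewrite cycle_edges_rot.
Qed.

Lemma surface_bounded_by_rotr T s k : surface_bounded_by T s -> surface_bounded_by T (rotr k s).
Proof. exact: surface_bounded_by_rot. Qed.

Lemma is_edge_of_tri T e t : t \in T -> e \subset t -> #|e| = 2 -> is_edge T e.
Proof. by move=> tT et e2; rewrite /is_edge e2 eqxx; apply/existsP; exists t; rewrite tT. Qed.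

Lemma is_edge_tri T e : is_edge T e -> exists2 t, t \in T & e \subset t.
Proof. by case/andP=> _ /existsP[t /andP[]]; exists t. Qed.

Lemma in_link_of_tri T x a t : t \in T -> x \in t -> a \in t -> a != x -> in_link T x a.
Proof. by move=> tT xt at_ ax; rewrite /in_link ax; apply/existsP; exists t; rewrite tT xt. Qed.

Lemma in_link_of_edge T x a : is_edge T [set x; a] -> in_link T x a.
Proof.
move=> xa; have /andP[xa2 _] := xa; have [t tT /subsetP sub] := is_edge_tri xa.
apply: (in_link_of_tri tT); rewrite ?sub ?set21 ?set22 //.
by apply: contraTneq xa2 => ->; rewrite setUid cards1.
Qed.

Lemma skel_rel_sym T : symmetric (skel_rel T).
Proof.
by move=> a b; apply/existsP/existsP => -[t /and3P[tT at_ bt]]; exists t; rewrite tT at_ bt.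
Qed.

Lemma link_rel_sym T x : symmetric (link_rel T x).
Proof. by move=> a b; rewrite /link_rel setUAC. Qed.

Lemma connect_link_sub T T' x a b : T \subset T' ->
  connect (link_rel T x) a b -> connect (link_rel T' x) a b.
Proof.
by move=> sub; apply: connect_sub => c d cd; apply: connect1; rewrite /link_rel (subsetP sub).
Qed.

Lemma connect_skel_sub T T' a b : T \subset T' ->
  connect (skel_rel T) a b -> connect (skel_rel T') a b.
Proof.
move=> sub; apply: connect_sub => c d /existsP[t /andP[tT cd]]; apply: connect1.
by apply/existsP; exists t; rewrite (subsetP sub).
Qed.

Section Gluing.
Variables (T : {set {set V}}) (t0 : {set V}).
Hypothesis t0_new : t0 \notin T.

Lemma ntri_setU1 e : ntri (t0 |: T) e = (ntri T e + (e \subset t0))%N.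
Proof.
rewrite /ntri; case et: (e \subset t0).
  have -> : [set t in t0 |: T | e \subset t] = t0 |: [set t in T | e \subset t].
    by apply/setP=> t; rewrite !inE; case: eqP => // ->; rewrite et.
  by rewrite cardsU1 inE (negbTE t0_new) addnC.
rewrite addn0; apply: eq_card => t; rewrite !inE; case: eqP => // ->.
by rewrite et (negbTE t0_new).
Qed.

Lemma is_edge_setU1 e : ~~ (e \subset t0) -> is_edge (t0 |: T) e = is_edge T e.
Proof.
move=> et; rewrite /is_edge; congr (_ && _); apply/existsP/existsP=> -[t].
  rewrite !inE => /andP[/orP[/eqP->|tT] h]; first by rewrite h in et.
  by exists t; rewrite tT h.
by move=> /andP[tT h]; exists t; rewrite !inE tT h orbT.
Qed.

Lemma boundary_edge_setU1 e : boundary_edge (t0 |: T) e =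
  if e \subset t0 then (#|e| == 2) && (ntri T e == 0) else boundary_edge T e.
Proof.
rewrite /boundary_edge ntri_setU1; case: ifP => et; last by rewrite is_edge_setU1 ?et ?addn0.
rewrite addn1 eqSS; congr (_ && _); apply/idP/idP => [/andP[] // | e2].
by apply: (is_edge_of_tri (setU11 t0 T) et); apply/eqP.
Qed.

Lemma edges_in_one_or_two_setU1 : edges_in_one_or_two T ->
  (forall e, e \subset t0 -> #|e| = 2 -> ntri T e <= 1) -> edges_in_one_or_two (t0 |: T).
Proof.
move=> hT ht0 e ie; rewrite ntri_setU1; case et: (e \subset t0); last first.
  by rewrite addn0; apply: hT; rewrite -is_edge_setU1 ?et.
have /andP[/eqP e2 _] := ie; have := ht0 e et e2.
by rewrite addn1 leq_eqVlt ltnS leqn0 => /orP[]/eqP->; [right | left].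
Qed.

Lemma in_link_setU1 x a : in_link (t0 |: T) x a ->
  in_link T x a \/ [/\ x \in t0, a \in t0 & a != x].
Proof.
case/andP=> ax /existsP[t /andP[/setU1P[->|tT] /andP[xt at_]]]; first by right.
by left; apply: (in_link_of_tri tT).
Qed.

Lemma links_connected_setU1 : #|t0| = 3 -> links_connected T ->
  (forall x, x \in t0 ->
     (exists2 c, c \in t0 & in_link T x c) \/ (forall a, ~~ in_link T x a)) ->
  links_connected (t0 |: T).
Proof.
move=> t3 hT ht0 x a b.
have sub : T \subset t0 |: T by apply: subsetUr.
case: (boolP (x \in t0)) => xt; last first.
  have old y : in_link (t0 |: T) x y -> in_link T x y.
    by case/in_link_setU1 => // -[xt']; rewrite xt' in xt.
  by move=> /old ha /old hb; apply: connect_link_sub sub (hT _ _ _ ha hb).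
have new y z : y \in t0 -> z \in t0 -> y != x -> z != x ->
    connect (link_rel (t0 |: T) x) y z.
  move=> yt zt yx zx; case: (eqVneq y z) => [->|yz]; first exact: connect0.
  by apply: connect1; rewrite /link_rel (set3_of_card3 t3 xt yt zt yx zx yz) setU11.
case: (ht0 x xt) => [[c ct xc] | lone]; last first.
  have fresh y : in_link (t0 |: T) x y -> y \in t0 /\ y != x.
    by case/in_link_setU1 => [hy | [_ yt yx]] //; have := lone y; rewrite hy.
  by move=> /fresh[at_ ax] /fresh[bt bx]; apply: new.
have cx : c != x by case/andP: xc.
have hub y : in_link (t0 |: T) x y -> connect (link_rel (t0 |: T) x) y c.
  case/in_link_setU1 => [hy | [_ yt yx]]; last exact: new.
  exact: connect_link_sub sub (hT _ _ _ hy xc).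
move=> /hub ac /hub bc; apply: connect_trans ac _.
by rewrite (sym_connect_sym (link_rel_sym _ x)).
Qed.

End Gluing.

Section Ear.
Variables (T : {set {set V}}) (u v w : V) (r : seq V).
Hypotheses (hT : surface_bounded_by T [:: u, v, w & r]) (r_nil : r != [::])
  (uw_apart : forall t, t \in T -> ~~ ((u \in t) && (w \in t))).

Let t0 := [set u; v; w].

Let uniq_uvwr : uniq [:: u, v, w & r]. Proof. by case: hT => _ _ _ _ []. Qed.

Let uvw_distinct : [/\ u != v, u != w, v != w & v \notin r].
Proof.
by move: uniq_uvwr; rewrite /= !inE !negb_or => /andP[/and3P[-> -> _] /andP[/andP[-> ->] _]].
Qed.

Let boundary_old e : boundary_edge T e <-> e \in cycle_edges [:: u, v, w & r].
Proof. by case: hT => _ _ _ _ [_ _ _]; apply. Qed.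

Let sub_t0 a b : a \in t0 -> b \in t0 -> [set a; b] \subset t0.
Proof. by move=> at0 bt0; apply/subsetP => z /set2P[]->. Qed.

Lemma ear_notin : t0 \notin T.
Proof. by apply/negP => /uw_apart; rewrite !inE !eqxx orbT. Qed.

Lemma ntri_ear_chord : ntri T [set u; w] = 0.
Proof.
apply/eqP; rewrite cards_eq0; apply/eqP/setP => t; rewrite !inE.
apply/negbTE/negP => /andP[/uw_apart + /subsetP ut].
by rewrite (ut u (set21 u w)) (ut w (set22 u w)).
Qed.

Lemma ear_sides_boundary : boundary_edge T [set u; v] /\ boundary_edge T [set v; w].
Proof. by split; apply/boundary_old; rewrite cycle_edges_cons !inE eqxx ?orbT. Qed.

Lemma ntri_ear_sides : ntri T [set u; v] = 1 /\ ntri T [set v; w] = 1.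
Proof. by have [/andP[_ /eqP->] /andP[_ /eqP->]] := ear_sides_boundary. Qed.

Lemma ear_boundary e :
  boundary_edge (t0 |: T) e <-> e \in cycle_edges [:: u, w & r].
Proof.
have [uv vw] := ntri_ear_sides.
have [u_v u_w v_w vr] := uvw_distinct.
have v_off : v \notin w :: rcons r u.
  by rewrite -cats1 -cat_cons mem_cat !inE !negb_or v_w vr (eq_sym v) u_v.
rewrite boundary_edge_setU1 ?ear_notin // !cycle_edges_cons /= inE.
case: ifP => et.
  have chord : (#|e| == 2) && (ntri T e == 0) = (e == [set u; w]).
    apply/idP/eqP => [/andP[/eqP e2 /eqP e0] | ->]; last by rewrite ntri_ear_chord cards2 u_w.
    by case: (sub_set3_card2 et e2) => ee; rewrite ee ?uv ?vw in e0 *.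
  have off_path : e \in path_edges w (rcons r u) = false.
    apply/negP => ep; have /boundary_old/andP[/andP[/eqP e2 _] /eqP e1] :
      e \in cycle_edges [:: u, v, w & r] by rewrite cycle_edges_cons !inE ep !orbT.
    case: (sub_set3_card2 et e2) => ee; rewrite ee in ep e1.
    - by have := mem_path_edges ep (set22 u v); rewrite (negbTE v_off).
    - by have := mem_path_edges ep (set21 v w); rewrite (negbTE v_off).
    - by rewrite ntri_ear_chord in e1.
  by rewrite chord off_path orbF.
rewrite boundary_old cycle_edges_cons /= !inE.
have ne a b : a \in t0 -> b \in t0 -> (e == [set a; b]) = false.
  by move=> at0 bt0; apply: contraFF et => /eqP->; apply: sub_t0.
by rewrite !ne ?inE ?eqxx ?orbT.
Qed.

Lemma surface_bounded_by_ear : surface_bounded_by (t0 |: T) [:: u, w & r].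
Proof.
have [u_v u_w v_w _] := uvw_distinct.
have [uv vw] := ntri_ear_sides.
have [/andP[euv _] /andP[evw _]] := ear_sides_boundary.
case: hT => h1 h2 h3 h4 [h5 _ _ _].
have sub : T \subset t0 |: T by apply: subsetUr.
split.
- by move=> t /setU1P[-> | /h1 //]; apply: cards3_distinct.
- by move=> x; have [t tT xt] := h2 x; exists t; rewrite ?(subsetP sub).
- by move=> a b; apply: connect_skel_sub sub (h3 a b).
- apply: edges_in_one_or_two_setU1 ear_notin h4 _ => e et e2.
  by case: (sub_set3_card2 et e2) => ->; rewrite ?uv ?vw ?ntri_ear_chord.
split=> //.
- apply: links_connected_setU1 h5 _; first exact: cards3_distinct.
  move=> x; rewrite !inE => /orP[/orP[]|]/eqP->; left.
  + by exists v; rewrite ?inE ?eqxx ?orbT // in_link_of_edge.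
  + by exists u; rewrite ?inE ?eqxx ?orbT // in_link_of_edge // setUC.
  + by exists v; rewrite ?inE ?eqxx ?orbT // in_link_of_edge // setUC.
- by apply: (subseq_uniq _ uniq_uvwr); rewrite /= eqxx eq_sym (negbTE v_w) eqxx subseq_refl.
- by rewrite /= !ltnS lt0n size_eq0.
- exact: ear_boundary.
Qed.

End Ear.

Lemma surface_bounded_by_ear_next T x u v w r :
  surface_bounded_by T [:: x, u, v, w & r] ->
  (forall t, t \in T -> ~~ ((u \in t) && (w \in t))) ->
  surface_bounded_by ([set u; v; w] |: T) [:: x, u, w & r].
Proof.
move=> /(surface_bounded_by_rot 1); rewrite rot1_cons => /surface_bounded_by_ear ear apart.
rewrite -[X in surface_bounded_by _ X](rotr1_rcons x [:: u, w & r]).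
apply: surface_bounded_by_rotr; rewrite !rcons_cons; apply: ear => //.
by rewrite -size_eq0 size_rcons.
Qed.

Lemma path_edges_head x s e : x \notin s -> e \in path_edges x s -> x \in e ->
  e = [set x; head x s].
Proof.
case: s => [|y s] //= xys; rewrite inE => /orP[/eqP-> // | es].
by move=> /(mem_path_edges es); rewrite (negbTE xys).
Qed.

End Surfaces.

Lemma connect_map (A B : finType) (f : A -> B) (e : rel A) (e' : rel B) :
  (forall a b, e a b -> e' (f a) (f b)) ->
  forall a b, connect e a b -> connect e' (f a) (f b).
Proof.
move=> fe a b /connectP[p pth ->]; elim: p a pth => [|c p IH] a /=; first by rewrite connect0.
by case/andP=> /fe ac /IH; apply: connect_trans (connect1 ac).
Qed.

Section Lifting.
Variable V : finType.
Implicit Types (T : {set {set V}}) (s r : seq V) (e t : {set V}) (a b x : V).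

Definition lift_complex T : {set {set option V}} := [set Some @: t | t : {set V} in T].

Lemma Some_inj : injective (@Some V). Proof. by move=> a b []. Qed.

Lemma lift_set_inj : injective (fun t : {set V} => Some @: t).
Proof. exact: imset_inj Some_inj. Qed.

Lemma lift_set2 a b : Some @: [set a; b] = [set Some a; Some b].
Proof. by rewrite imsetU !imset_set1. Qed.

Lemma lift_set3 a b x : Some @: [set a; b; x] = [set Some a; Some b; Some x].
Proof. by rewrite !imsetU !imset_set1. Qed.

Lemma lift_subset e t : (Some @: e \subset Some @: t) = (e \subset t).
Proof.
apply/idP/idP => [/subsetP h | /(imsetS Some) //].
by apply/subsetP => z ze; have := h (Some z); rewrite !(mem_imset _ _ Some_inj); apply.
Qed.

Lemma None_notin_lift e : None \notin Some @: e.
Proof. by apply/imsetP => -[]. Qed.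

Lemma lift_preim (E : {set option V}) : None \notin E -> E = Some @: (Some @^-1: E).
Proof.
move=> En; apply/setP => -[z|]; first by rewrite (mem_imset _ _ Some_inj) inE.
by rewrite (negbTE En) (negbTE (None_notin_lift _)).
Qed.

Lemma mem_lift_complex T t : (Some @: t \in lift_complex T) = (t \in T).
Proof. exact: (mem_imset _ _ lift_set_inj). Qed.

Lemma None_notin_lift_complex T (t' : {set option V}) : t' \in lift_complex T -> None \notin t'.
Proof. by case/imsetP => t _ ->; apply: None_notin_lift. Qed.

Lemma ntri_lift T e : ntri (lift_complex T) (Some @: e) = ntri T e.
Proof.
rewrite /ntri -(card_imset _ lift_set_inj).
congr #|pred_of_set _|; apply/setP => t'; rewrite !inE.
apply/andP/imsetP => [[/imsetP[t tT ->]] | [t]].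
  by rewrite lift_subset => et; exists t; rewrite // inE tT.
by rewrite inE => /andP[tT et] ->; rewrite mem_lift_complex lift_subset.
Qed.

Lemma ntri_lift_None T (E : {set option V}) : None \in E -> ntri (lift_complex T) E = 0.
Proof.
move=> En; apply/eqP; rewrite cards_eq0; apply/eqP/setP => t'; rewrite !inE.
apply/negbTE/negP => /andP[/None_notin_lift_complex + /subsetP Et].
by rewrite Et.
Qed.

Lemma is_edge_lift T e : is_edge (lift_complex T) (Some @: e) = is_edge T e.
Proof.
rewrite /is_edge (card_imset _ Some_inj); congr (_ && _).
apply/existsP/existsP => [[t' /andP[/imsetP[t tT ->]]] | [t /andP[tT et]]].
  by rewrite lift_subset => et; exists t; rewrite tT.
by exists (Some @: t); rewrite mem_lift_complex tT lift_subset.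
Qed.

Lemma boundary_edge_lift T e : boundary_edge (lift_complex T) (Some @: e) = boundary_edge T e.
Proof. by rewrite /boundary_edge is_edge_lift ntri_lift. Qed.

Lemma edges_in_one_or_two_lift T : edges_in_one_or_two T -> edges_in_one_or_two (lift_complex T).
Proof.
move=> hT E; case: (boolP (None \in E)) => En.
  by case/is_edge_tri => t' /None_notin_lift_complex + /subsetP Et; rewrite Et.
by rewrite (lift_preim En) is_edge_lift ntri_lift; apply: hT.
Qed.

Lemma in_link_lift T x (oa : option V) : in_link (lift_complex T) (Some x) oa ->
  exists2 a, oa = Some a & in_link T x a.
Proof.
case/andP => ax /existsP[t' /andP[/imsetP[t tT ->] /andP[]]].
rewrite (mem_imset _ _ Some_inj) => xt /imsetP[a at_ ea]; subst oa; exists a => //.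
by apply: (in_link_of_tri tT) => //; apply: contraNneq ax => ->.
Qed.

Lemma in_link_lift_None T oa : ~~ in_link (lift_complex T) None oa.
Proof.
by apply/negP => /andP[_ /existsP[t' /andP[/None_notin_lift_complex/negbTE -> //]]].
Qed.

Lemma lift_in_link T x a : in_link T x a -> in_link (lift_complex T) (Some x) (Some a).
Proof.
case/andP => ax /existsP[t /andP[tT /andP[xt at_]]].
apply: (in_link_of_tri (t := Some @: t));
  by rewrite ?mem_lift_complex ?(mem_imset _ _ Some_inj) ?(inj_eq Some_inj).
Qed.

Lemma links_connected_lift T : links_connected T -> links_connected (lift_complex T).
Proof.
move=> hT [x|] oa ob; last by rewrite (negbTE (in_link_lift_None _ _)).
case/in_link_lift => a -> ha /in_link_lift[b -> hb].
apply: (connect_map (f := Some)) (hT _ _ _ ha hb) => c d.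
by rewrite /link_rel -lift_set3 mem_lift_complex.
Qed.

Lemma path_edges_lift x s :
  path_edges (Some x) (map Some s) = map (fun e => Some @: e) (path_edges x s).
Proof. by elim: s x => [|y s IH] x //=; rewrite IH lift_set2. Qed.

Section Apex.
Variables (T : {set {set V}}) (u v : V) (r : seq V).
Hypothesis hT : surface_bounded_by T [:: u, v & r].

Let t0 : {set option V} := [set Some u; None; Some v].

Let uvr : [/\ u != v, u \notin r, v \notin r & r != [::]].
Proof.
case: hT => _ _ _ _ [_ /and3P[+ vr _] sz _]; rewrite inE negb_or => /andP[uv ur].
by split; rewrite // -size_eq0 -lt0n.
Qed.

Let boundary_old e : boundary_edge T e <-> e \in [set u; v] :: path_edges v (rcons r u).
Proof. by case: hT => _ _ _ _ [_ _ _ /(_ e)]; rewrite cycle_edges_cons. Qed.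

Lemma apex_notin : t0 \notin lift_complex T.
Proof. by apply/negP => /None_notin_lift_complex; rewrite !inE eqxx orbT. Qed.

Lemma card_apex : #|t0| = 3.
Proof. by case: uvr => uv _ _ _; rewrite cards3_distinct // (inj_eq Some_inj). Qed.

Lemma uv_notin_path : [set u; v] \notin path_edges v (rcons r u).
Proof.
case: uvr => uv ur vr; case: r ur vr => [//|y r'] ur vr _; apply/negP => /path_edges_head.
rewrite -cats1 mem_cat negb_or vr inE eq_sym uv set22 /= => /(_ isT isT) /setP/(_ u).
by rewrite !inE eqxx (negbTE uv) /= => /esym/eqP yu; rewrite yu inE eqxx in ur.
Qed.

Lemma apex_boundary E : boundary_edge (t0 |: lift_complex T) E <->
  E \in cycle_edges [:: Some u, None, Some v & map Some r].
Proof.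
have [uv _ _ _] := uvr.
have /andP[_ /eqP ntri_uv] : boundary_edge T [set u; v] by apply/boundary_old; rewrite inE eqxx.
have Some_uv : Some u != Some v by rewrite (inj_eq Some_inj).
rewrite boundary_edge_setU1 ?apex_notin // cycle_edges_cons /= -map_rcons path_edges_lift !inE.
have lift_uv e : e \in path_edges v (rcons r u) -> Some @: e \subset t0 -> False.
  move=> ep et; have /boundary_old/andP[/andP[/eqP e2 _] _] :
    e \in [set u; v] :: path_edges v (rcons r u) by rewrite inE ep orbT.
  rewrite -(card_imset _ Some_inj) in e2.
  case: (sub_set3_card2 et e2) => ee; try by have := None_notin_lift e; rewrite ee !inE eqxx ?orbT.
  by move: ep uv_notin_path; rewrite (lift_set_inj (etrans ee (esym (lift_set2 u v)))) => ->.
case: ifP => Et.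
  split=> [/andP[/eqP E2 /eqP E0] | ].
    case: (sub_set3_card2 Et E2) => EE; rewrite EE ?eqxx ?orbT //.
    by move: E0; rewrite EE -lift_set2 ntri_lift ntri_uv.
  case/or3P => [/eqP-> | /eqP-> | /mapP[e ep EE]]; last by case: (lift_uv e); rewrite // -EE.
    by rewrite cards2 ntri_lift_None ?set22.
  by rewrite cards2 ntri_lift_None ?set21.
have ne (a b : option V) : a \in t0 -> b \in t0 -> (E == [set a; b]) = false.
  by move=> at0 bt0; apply: contraFF Et => /eqP->; apply/subsetP => z /set2P[]->.
rewrite !ne ?inE ?eqxx ?orbT //=.
case: (boolP (None \in E)) => En.
  rewrite /boundary_edge ntri_lift_None // andbF; split => // /mapP[e _ EE].
  by move: En; rewrite EE (negbTE (None_notin_lift _)).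
rewrite (lift_preim En) boundary_edge_lift (mem_map lift_set_inj) boundary_old inE.
suff -> : (Some @^-1: E == [set u; v]) = false by [].
apply: contraFF Et => /eqP ee; rewrite (lift_preim En) ee lift_set2.
by apply/subsetP => z /set2P[]->; rewrite !inE eqxx ?orbT.
Qed.

Lemma skel_connected_apex oa ob : connect (skel_rel (t0 |: lift_complex T)) oa ob.
Proof.
case: hT => _ _ skel _ _.
have to_u y : connect (skel_rel (t0 |: lift_complex T)) y (Some u).
  case: y => [x|]; last first.
    by apply: connect1; apply/existsP; exists t0; rewrite setU11 /t0 !inE !eqxx ?orbT.
  apply: (connect_map (f := Some)) (skel x u) => a b /existsP[t /andP[tT ab]].
  apply/existsP; exists (Some @: t).
  by rewrite !inE mem_lift_complex tT !(mem_imset _ _ Some_inj) orbT.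
apply: connect_trans (to_u oa) _.
by rewrite (sym_connect_sym (skel_rel_sym _)).
Qed.

Lemma surface_bounded_by_apex :
  surface_bounded_by (t0 |: lift_complex T) [:: Some u, None, Some v & map Some r].
Proof.
have /andP[euv /eqP ntri_uv] : boundary_edge T [set u; v].
  by apply/boundary_old; rewrite inE eqxx.
have luv := in_link_of_edge euv.
have lvu : in_link T v u by apply: in_link_of_edge; rewrite setUC.
case: hT => h1 h2 h3 h4 [h5 h6 _ _].
have sub : lift_complex T \subset t0 |: lift_complex T by apply: subsetUr.
split.
- by move=> t /setU1P[-> | /imsetP[t1 /h1 t13 ->]]; rewrite ?card_apex ?(card_imset _ Some_inj).
- case=> [x|]; last by exists t0; rewrite ?setU11 // !inE eqxx orbT.
  have [t tT xt] := h2 x; exists (Some @: t); last by rewrite (mem_imset _ _ Some_inj).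
  by rewrite (subsetP sub) ?mem_lift_complex.
- exact: skel_connected_apex.
- apply: edges_in_one_or_two_setU1 apex_notin (edges_in_one_or_two_lift h4) _ => e et e2.
  case: (sub_set3_card2 et e2) => ->; first by rewrite ntri_lift_None ?set22.
    by rewrite ntri_lift_None ?set21.
  by rewrite -lift_set2 ntri_lift ntri_uv.
split.
- apply: links_connected_setU1 card_apex (links_connected_lift h5) _.
  move=> x; rewrite !inE => /orP[/orP[]|]/eqP->; [left | right | left].
  + by exists (Some v); rewrite ?lift_in_link // !inE eqxx orbT.
  + by move=> a; apply: in_link_lift_None.
  + by exists (Some u); rewrite ?lift_in_link // !inE eqxx.
- have None_off : None \notin map Some r by apply/mapP => -[].
  move: h6; rewrite -(map_inj_uniq Some_inj) /= !inE !negb_or (negbTE None_off) /=.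
  by case/andP=> /andP[-> ->] ->.
- by rewrite /= size_map.
- exact: apex_boundary.
Qed.

End Apex.
End Lifting.

Section Enumeration.
Variable V : finType.

Lemma cycle_edges_nth (x0 : V) n s e : size s = n -> (e \in cycle_edges s <->
  exists i : 'I_n, e = [set nth x0 s i; nth x0 s (ordS i)]).
Proof.
move=> <-.
have nth_rot1 i : i < size s -> nth x0 (rot 1 s) i = nth x0 s (i.+1 %% size s).
  case: s => [//|y s'] /=; rewrite ltnS => hi; rewrite rot1_cons nth_rcons.
  case: (ltngtP i (size s')) => hi'; first by rewrite modn_small.
    by rewrite leqNgt hi' in hi.
  by rewrite hi' modnn.
have sz : size (zip s (rot 1 s)) = size s by rewrite size_zip size_rot minnn.
split.
  case/mapP => -[a b] /(nthP (x0, x0))[i hi eab] ->; rewrite sz in hi; exists (Ordinal hi).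
  by move: eab; rewrite nth_zip ?size_rot // => -[<- <-] /=; rewrite nth_rot1.
case=> i ->; apply/mapP; exists (nth (x0, x0) (zip s (rot 1 s)) i).
  by apply: mem_nth; rewrite sz.
by rewrite nth_zip ?size_rot //= nth_rot1.
Qed.

Lemma surface_bounded_by_enum n (T : {set {set V}}) (w : 'I_n -> V) : 2 < n ->
  surface_with_boundary_cycle T w <-> surface_bounded_by T (map w (enum 'I_n)).
Proof.
move=> n2; have sz : size (map w (enum 'I_n)) = n by rewrite size_map size_enum_ord.
case: n n2 w sz => [//|n] n2 w sz.
have nth_w (i : 'I_n.+1) : nth (w ord0) (map w (enum 'I_n.+1)) i = w i.
  by rewrite (nth_map ord0) ?size_enum_ord // nth_ord_enum.
have edges e : e \in cycle_edges (map w (enum 'I_n.+1)) <->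
               exists i : 'I_n.+1, e = [set w i; w (ordS i)].
  rewrite (cycle_edges_nth (w ord0) _ sz).
  by split=> -[i ->]; exists i; rewrite !nth_w.
split=> [[h1 h2 h3 h4 [h5 [h6 h7]]] | [h1 h2 h3 h4 [h5 h6 _ h7]]].
  split=> //; split; rewrite ?sz //.
  - by rewrite (map_inj_uniq h6) enum_uniq.
  - by move=> e; apply: iff_trans (h7 e) (iff_sym (edges e)).
split=> //; split=> //; split; first exact/injectiveP.
by move=> e; apply: iff_trans (h7 e) (edges e).
Qed.

End Enumeration.

Section Cones.
Variable V : finType.
Implicit Types (T : {set {set V}}) (r : seq V) (a b c d : V).

Lemma surface_cone_corner T a b c r : surface_bounded_by T [:: a, b, c & r] ->
  surface_bounded_by ([set None; Some b; Some c] |: ([set Some a; None; Some b] |: lift_complex T))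
    [:: Some a, None, Some c & map Some r].
Proof.
move=> hT; have := hT; case=> _ _ _ _ [_ /and3P[+ + _] _ _].
rewrite !inE !negb_or => /and3P[_ ac _] /andP[bc _].
have /= apex := surface_bounded_by_apex hT.
apply: surface_bounded_by_ear_next apex _.
move=> t /setU1P[-> | /None_notin_lift_complex/negbTE -> //].
by rewrite !inE !(inj_eq (@Some_inj _)) /= (eq_sym c) (negbTE ac) (eq_sym c) (negbTE bc).
Qed.

Lemma surface_cone_path3 T a b c d r : surface_bounded_by T [:: a, b, c, d & r] ->
  surface_bounded_by ([set None; Some c; Some d] |: ([set None; Some b; Some c] |:
    ([set Some a; None; Some b] |: lift_complex T))) [:: Some a, None, Some d & map Some r].
Proof.
move=> hT; have := hT; case=> _ _ _ _ [_ /and4P[+ + + _] _ _].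
rewrite !inE !negb_or => /and4P[_ _ ad _] /and3P[_ bd _] /andP[cd _].
have /= corner := surface_cone_corner hT.
apply: surface_bounded_by_ear_next corner _.
move=> t /setU1P[-> | /setU1P[-> | /None_notin_lift_complex/negbTE -> //]];
  by rewrite !inE !(inj_eq (@Some_inj _)) /= ?(eq_sym d) ?(negbTE ad) ?(negbTE bd) ?(negbTE cd).
Qed.

End Cones.

Local Open Scope ring_scope.

Lemma det_mx33 (R : comNzRingType) (A : 'M[R]_3) :
  let a i j := A (inord i) (inord j) in
  \det A = a 0%N 0%N * (a 1%N 1%N * a 2%N 2%N - a 1%N 2%N * a 2%N 1%N)
         - a 0%N 1%N * (a 1%N 0%N * a 2%N 2%N - a 1%N 2%N * a 2%N 0%N)
         + a 0%N 2%N * (a 1%N 0%N * a 2%N 1%N - a 1%N 1%N * a 2%N 0%N).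
Proof.
move=> a; have -> : A = \matrix_(i, j) a i j by apply/matrixP => i j; rewrite mxE /a !inord_val.
rewrite (expand_det_row _ 0) !big_ord_recl big_ord0 /cofactor.
rewrite !(expand_det_row _ 0) !big_ord_recl !big_ord0 /cofactor !det_mx11 !mxE /bump /=.
ring.
Qed.

Section Geometry.
Variable R : realType.
Implicit Types (a b c x y : 'rV[R]_3).

Definition i1 : 'I_3 := lift ord0 ord0.
Definition i2 : 'I_3 := lift ord0 (lift ord0 ord0).

Lemma sum3 (F : 'I_3 -> R) : \sum_(i < 3) F i = F ord0 + F i1 + F i2.
Proof. by rewrite !big_ord_recl big_ord0 addr0 addrA. Qed.

Lemma sqdistC x y : sqdist x y = sqdist y x.
Proof. by rewrite /sqdist !sum3; ring. Qed.

Lemma sqdist0 x : sqdist x x = 0.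
Proof. by rewrite /sqdist big1 // => i _; rewrite subrr expr0n. Qed.

Lemma sqdist_midpoint a b c :
  sqdist (2^-1 *: (a + b)) c = (2 * sqdist a c + 2 * sqdist b c - sqdist a b) / 4.
Proof. by rewrite /sqdist !sum3 !mxE; field. Qed.

Lemma midpoint_reflect a b : 2^-1 *: ((2 *: a - b) + b) = a.
Proof. by rewrite subrK scalerA mulVf ?scale1r ?pnatr_eq0. Qed.

Lemma sqdist_reflect a b c :
  sqdist (2 *: a - b) c = 2 * sqdist a b + 2 * sqdist a c - sqdist b c.
Proof. by rewrite /sqdist !sum3 !mxE; ring. Qed.

Definition cross x y : 'rV[R]_3 :=
  \row_(k < 3) nth 0 [:: x 0 i1 * y 0 i2 - x 0 i2 * y 0 i1;
                         x 0 i2 * y 0 ord0 - x 0 ord0 * y 0 i2;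
                         x 0 ord0 * y 0 i1 - x 0 i1 * y 0 ord0] k.

Lemma sqdist_frame a b c (s t h s' t' : R) :
  sqdist (a + s *: (c - a) + t *: (b - a) + h *: cross (c - a) (b - a))
         (a + s' *: (c - a) + t' *: (b - a)) =
    (s - s') ^+ 2 * sqdist c a + (t - t') ^+ 2 * sqdist b a
    + (s - s') * (t - t') * (sqdist c a + sqdist b a - sqdist c b)
    + h ^+ 2 * (sqdist c a * sqdist b a - (sqdist c a + sqdist b a - sqdist c b) ^+ 2 / 4).
Proof. by rewrite /sqdist !sum3 !mxE /=; field. Qed.

Lemma exists_point_sqdist_131 a b c : sqdist a b = 4 -> sqdist b c = 4 -> sqdist c a = 1 ->
  exists x, [/\ sqdist x a = 1, sqdist x b = 3 & sqdist x c = 1].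
Proof.
(* The coefficients solve the three distance equations given by [sqdist_frame]. *)
move=> ab bc ca; have frame := sqdist_frame a b c (2/5) (1/5) (-(2/5)).
set u := c - a in frame *; set v := b - a in frame *.
exists (a + (2/5) *: u + (1/5) *: v + (-(2/5)) *: cross u v).
have ea : a + 0 *: u + 0 *: v = a by rewrite !scale0r !addr0.
have eb : a + 0 *: u + 1 *: v = b by rewrite scale0r addr0 scale1r addrC subrK.
have ec : a + 1 *: u + 0 *: v = c by rewrite scale0r addr0 scale1r addrC subrK.
rewrite (sqdistC b a) ab (sqdistC c b) bc ca in frame.
by split; [move: (frame 0 0) | move: (frame 0 1) | move: (frame 1 0)];
  rewrite ?ea ?eb ?ec => ->; lra.
Qed.

Lemma sqdist_mx x y : sqdist x y = ((x - y) *m (x - y)^T) 0 0.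
Proof. by rewrite /sqdist mxE; apply: eq_bigr => k _; rewrite !mxE expr2. Qed.

Lemma sqdist_rigid c (L : 'M[R]_3) : L *m L^T = 1%:M ->
  forall x y, sqdist (c + x *m L) (c + y *m L) = sqdist x y.
Proof.
move=> LL x y; rewrite !sqdist_mx opprD addrACA subrr add0r -mulmxBl.
by rewrite trmx_mul mulmxA -(mulmxA _ L) LL mulmx1.
Qed.

Lemma rigid_midpoint c (L : 'M[R]_3) x y :
  c + (2^-1 *: (x + y)) *m L = 2^-1 *: ((c + x *m L) + (c + y *m L)).
Proof.
rewrite addrACA -mulmxDl -scalemxAl -mulr2n -scaler_nat [RHS]scalerDr scalerA.
by rewrite mulVf ?scale1r ?pnatr_eq0.
Qed.

Lemma eq_sqdist_lt (p q : 'I_4 -> 'rV[R]_3) :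
  (forall i j : 'I_4, (i < j)%N -> sqdist (p i) (p j) = sqdist (q i) (q j)) ->
  forall i j, sqdist (p i) (p j) = sqdist (q i) (q j).
Proof.
move=> h i j; case: (ltngtP (val i) (val j)) => [/h // | /h ji | /val_inj ->].
  by rewrite sqdistC ji sqdistC.
by rewrite !sqdist0.
Qed.

Definition edge_mx (p : 'I_4 -> 'rV[R]_3) : 'M[R]_3 :=
  \matrix_(i < 3) (p (lift ord0 i) - p ord0).

Definition gram (p : 'I_4 -> 'rV[R]_3) : 'M[R]_3 :=
  \matrix_(i, j) ((sqdist (p (lift ord0 i)) (p ord0) + sqdist (p (lift ord0 j)) (p ord0)
                  - sqdist (p (lift ord0 i)) (p (lift ord0 j))) / 2).

Lemma edge_mx_gram p : edge_mx p *m (edge_mx p)^T = gram p.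
Proof.
apply/matrixP => i j; rewrite !mxE; under eq_bigr => k _ do rewrite !mxE.
by rewrite /sqdist !sum3; field.
Qed.

Lemma congruent_rigid (p q : 'I_4 -> 'rV[R]_3) :
  (forall i j, sqdist (p i) (p j) = sqdist (q i) (q j)) -> \det (gram p) != 0 ->
  exists c (L : 'M[R]_3), L *m L^T = 1%:M /\ forall i, c + p i *m L = q i.
Proof.
move=> pq det_p; set P := edge_mx p; set Q := edge_mx q.
have PQ : Q *m Q^T = P *m P^T.
  by rewrite !edge_mx_gram; apply/matrixP => i j; rewrite !mxE !pq.
have Pu : P *m P^T \in unitmx by rewrite edge_mx_gram unitmxE unitfE.
(* [K] is a right inverse of [P]; then [K *m Q] is orthogonal since [Q] and [P] have the same
   Gram matrix, and it maps the edge vectors of [p] to those of [q]. *)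
set K := P^T *m invmx (P *m P^T).
have PK : P *m K = 1%:M by rewrite mulmxA mulmxV.
have KP : K *m P = 1%:M := mulmx1C PK.
exists (q ord0 - p ord0 *m (K *m Q)), (K *m Q); split.
  by rewrite trmx_mul !mulmxA -(mulmxA K) PQ !mulmxA KP mul1mx -trmx_mul KP trmx1.
move=> i; rewrite addrAC -addrA -mulmxBl; case: (unliftP ord0 i) => [j ->|->].
  rewrite -(rowK (fun j => p (lift ord0 j) - p ord0) j) -row_mul mulmxA PK mul1mx rowK.
  by rewrite addrC subrK.
by rewrite subrr mul0mx addr0.
Qed.

Lemma det_gram4 a0 a1 a2 a3 :
  let g x y := (sqdist x a0 + sqdist y a0 - sqdist x y) / 2 in
  \det (gram (fun i : 'I_4 => nth 0 [:: a0; a1; a2; a3] i)) =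
    g a1 a1 * (g a2 a2 * g a3 a3 - g a2 a3 * g a3 a2)
    - g a1 a2 * (g a2 a1 * g a3 a3 - g a2 a3 * g a3 a1)
    + g a1 a3 * (g a2 a1 * g a3 a2 - g a2 a2 * g a3 a1).
Proof. by rewrite det_mx33 !mxE /bump /= !inordK. Qed.

Lemma congruent4_rigid a0 a1 a2 a3 b0 b1 b2 b3 :
  sqdist a0 a1 = sqdist b0 b1 -> sqdist a0 a2 = sqdist b0 b2 -> sqdist a0 a3 = sqdist b0 b3 ->
  sqdist a1 a2 = sqdist b1 b2 -> sqdist a1 a3 = sqdist b1 b3 -> sqdist a2 a3 = sqdist b2 b3 ->
  \det (gram (fun i : 'I_4 => nth 0 [:: a0; a1; a2; a3] i)) != 0 ->
  exists c (L : 'M[R]_3), L *m L^T = 1%:M /\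
    map (fun x => c + x *m L) [:: a0; a1; a2; a3] = [:: b0; b1; b2; b3].
Proof.
move=> d01 d02 d03 d12 d13 d23.
move=> /(congruent_rigid (q := fun i : 'I_4 => nth 0 [:: b0; b1; b2; b3] i)).
case=> [|c [L [LL cL]]]; first by apply: eq_sqdist_lt => -[[|[|[|[|//]]]] ?] [[|[|[|[|//]]]] ?].
exists c, L; split=> //=; congr [:: _; _; _; _].
- exact: (cL (@Ordinal 4 0 isT)).
- exact: (cL (@Ordinal 4 1 isT)).
- exact: (cL (@Ordinal 4 2 isT)).
- exact: (cL (@Ordinal 4 3 isT)).
Qed.

Lemma unit_rhombus_sqdist (q : 'I_4 -> 'rV[R]_3) : unit_rhombus (2^-1) (Num.sqrt 3) q ->
  [/\ sqdist (q (inord 0)) (q (inord 1)) = 1, sqdist (q (inord 1)) (q (inord 2)) = 1,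
      sqdist (q (inord 2)) (q (inord 3)) = 1, sqdist (q (inord 3)) (q (inord 0)) = 1 &
      sqdist (q (inord 0)) (q (inord 2)) = 4^-1 /\ sqdist (q (inord 1)) (q (inord 3)) = 3].
Proof.
case=> sides d02 d13; have side k : (k < 4)%N -> sqdist (q (inord k)) (q (inord (k.+1 %% 4))) = 1.
  move=> k4; rewrite -(sides (inord k)); congr (sqdist _ (q _)).
  by apply: val_inj; rewrite /= !inordK // ltn_pmod.
split; rewrite ?side //; split; first by rewrite d02 exprVn -natrX.
by rewrite d13 sqr_sqrtr // ler0n.
Qed.

End Geometry.

Section Domes.
Variable R : realType.
Implicit Types (ps : seq 'rV[R]_3) (x y z w X : 'rV[R]_3).

Definition unit_faces (V : finType) (T : {set {set V}}) (f : V -> 'rV[R]_3) : Prop :=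
  forall t a b, t \in T -> a \in t -> b \in t -> a != b -> sqdist (f a) (f b) = 1.

Definition domeable_seq ps : Prop :=
  exists (V : finType) (T : {set {set V}}) (f : V -> 'rV[R]_3) (s : seq V),
    [/\ surface_bounded_by T s, unit_faces T f & map f s = ps].

Section UnitFaces.
Variables (V : finType) (T : {set {set V}}) (f : V -> 'rV[R]_3).
Hypothesis fT : unit_faces T f.

Lemma unit_faces_cycle_edge s a b : surface_bounded_by T s ->
  [set a; b] \in cycle_edges s -> sqdist (f a) (f b) = 1.
Proof.
case=> _ _ _ _ [_ _ _ bd] /bd /andP[/andP[ab2 /existsP[t /andP[tT /subsetP abt]]] _].
apply: (fT tT); rewrite ?abt ?set21 ?set22 //.
by apply: contraTneq ab2 => ->; rewrite setUid cards1.
Qed.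

Lemma unit_faces_setU1 a b c : sqdist (f a) (f b) = 1 -> sqdist (f b) (f c) = 1 ->
  sqdist (f a) (f c) = 1 -> unit_faces ([set a; b; c] |: T) f.
Proof.
move=> ab bc ac t x y /setU1P[-> | tT]; last exact: fT.
rewrite !inE.
have sym (k l : V) : sqdist (f k) (f l) = sqdist (f l) (f k) by apply: sqdistC.
by move=> /orP[/orP[]|]/eqP-> /orP[/orP[]|]/eqP->; rewrite ?eqxx // => _; rewrite // sym.
Qed.

Lemma unit_faces_lift X : unit_faces (lift_complex T) (oapp f X).
Proof.
move=> _ _ _ /imsetP[t tT ->] /imsetP[a at_ ->] /imsetP[b bt ->] ab /=.
by apply: (fT tT) => //; apply: contraNneq ab => ->.
Qed.

Lemma unit_faces_isometry (g : 'rV[R]_3 -> 'rV[R]_3) :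
  (forall x y, sqdist (g x) (g y) = sqdist x y) -> unit_faces T (g \o f).
Proof. by move=> g_iso t a b tT at_ bt ab /=; rewrite g_iso; apply: (fT tT). Qed.

End UnitFaces.

Lemma domeable_seq_rot k ps : domeable_seq ps -> domeable_seq (rot k ps).
Proof.
case=> V [T [f [s [sT fT <-]]]]; exists V, T, f, (rot k s).
by rewrite map_rot; split=> //; apply: surface_bounded_by_rot.
Qed.

Lemma domeable_seq_isometry (g : 'rV[R]_3 -> 'rV[R]_3) ps :
  (forall x y, sqdist (g x) (g y) = sqdist x y) -> domeable_seq ps -> domeable_seq (map g ps).
Proof.
move=> g_iso [V [T [f [s [sT fT <-]]]]]; exists V, T, (g \o f), s.
by rewrite map_comp; split=> //; apply: unit_faces_isometry.
Qed.

Lemma domeable_seq_cone_edge x y X ps : sqdist X x = 1 -> sqdist X y = 1 ->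
  domeable_seq [:: x, y & ps] -> domeable_seq [:: x, X, y & ps].
Proof.
move=> Xx Xy [V [T [f [s [sT fT fs]]]]].
case: s sT fs => [|a [|b s]] // sT [ea eb eps]; subst x y ps.
have ab := unit_faces_cycle_edge fT sT (cycle_edge_first a b s).
exists (option V), ([set Some a; None; Some b] |: lift_complex T), (oapp f X),
  [:: Some a, None, Some b & map Some s].
rewrite /= -map_comp; split=> //; first exact: surface_bounded_by_apex.
by apply: unit_faces_setU1 => //=; [apply: unit_faces_lift | rewrite sqdistC].
Qed.

Lemma domeable_seq_cone_corner x y z X ps :
  sqdist X x = 1 -> sqdist X y = 1 -> sqdist X z = 1 ->
  domeable_seq [:: x, y, z & ps] -> domeable_seq [:: x, X, z & ps].
Proof.
move=> Xx Xy Xz [V [T [f [s [sT fT fs]]]]].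
case: s sT fs => [|a [|b [|c s]]] // sT [ea eb ec eps]; subst x y z ps.
have ab := unit_faces_cycle_edge fT sT (cycle_edge_first a b _).
have bc : sqdist (f b) (f c) = 1.
  apply: (unit_faces_cycle_edge fT (surface_bounded_by_rot 1 sT)).
  by rewrite rot1_cons cycle_edge_first.
exists (option V), ([set None; Some b; Some c] |: ([set Some a; None; Some b] |: lift_complex T)),
  (oapp f X), [:: Some a, None, Some c & map Some s].
rewrite /= -map_comp; split=> //; first exact: surface_cone_corner.
apply: unit_faces_setU1 => //=; first apply: unit_faces_setU1 => //=.
- exact: unit_faces_lift.
- by rewrite sqdistC.
Qed.

Lemma domeable_seq_cone_path3 x y z w X ps :
  sqdist X x = 1 -> sqdist X y = 1 -> sqdist X z = 1 -> sqdist X w = 1 ->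
  domeable_seq [:: x, y, z, w & ps] -> domeable_seq [:: x, X, w & ps].
Proof.
move=> Xx Xy Xz Xw [V [T [f [s [sT fT fs]]]]].
case: s sT fs => [|a [|b [|c [|d s]]]] // sT [ea eb ec ed eps]; subst x y z w ps.
have ab := unit_faces_cycle_edge fT sT (cycle_edge_first a b _).
have bc : sqdist (f b) (f c) = 1.
  apply: (unit_faces_cycle_edge fT (surface_bounded_by_rot 1 sT)).
  by rewrite rot1_cons cycle_edge_first.
have cd : sqdist (f c) (f d) = 1.
  apply: (unit_faces_cycle_edge fT (surface_bounded_by_rot 2 sT)).
  by rewrite /rot /= cycle_edge_first.
exists (option V), ([set None; Some c; Some d] |: ([set None; Some b; Some c] |:
  ([set Some a; None; Some b] |: lift_complex T))), (oapp f X),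
  [:: Some a, None, Some d & map Some s].
rewrite /= -map_comp; split=> //; first exact: surface_cone_path3.
apply: unit_faces_setU1 => //=; first apply: unit_faces_setU1 => //=.
  apply: unit_faces_setU1 => //=.
- exact: unit_faces_lift.
- by rewrite sqdistC.
Qed.

Lemma domeableE n (p : 'I_n.+1 -> 'rV[R]_3) : (1 < n)%N ->
  domeable p <-> domeable_seq (mkseq (fun i => p (inord i)) n.+1).
Proof.
move=> n1; have -> : mkseq (fun i => p (inord i)) n.+1 = map p (enum 'I_n.+1).
  by rewrite /mkseq -val_enum_ord -map_comp; apply: eq_map => i /=; rewrite inord_val.
split=> [[V [T [f [w [Tw fT fw]]]]] | [V [T [f [s [sT fT fs]]]]]].
  exists V, T, f, (map w (enum 'I_n.+1)); split=> //; first exact/surface_bounded_by_enum.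
  by rewrite -map_comp; apply: eq_map => i /=; rewrite fw.
have sz : size s = n.+1 by rewrite -(size_map f) fs size_map size_enum_ord.
case: s sT fs sz => [//|x0 s'] sT fs sz.
pose w (i : 'I_n.+1) := nth x0 (x0 :: s') i.
have sw : map w (enum 'I_n.+1) = x0 :: s'.
  by rewrite -(mkseq_nth x0 (x0 :: s')) sz /mkseq -val_enum_ord -map_comp.
exists V, T, f, w; split=> // [|i]; first by apply/surface_bounded_by_enum; rewrite // sw.
rewrite /w -(nth_map x0 (f x0)) ?sz // fs (nth_map i) ?size_enum_ord //.
by rewrite nth_ord_enum.
Qed.

End Domes.

Section Proposition.
Variable R : realType.
Variables (a b c q0 q1 q2 q3 : 'rV[R]_3).
Hypotheses (ab : sqdist a b = 4) (bc : sqdist b c = 4) (ca : sqdist c a = 1).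
Hypotheses (q01 : sqdist q0 q1 = 1) (q12 : sqdist q1 q2 = 1) (q23 : sqdist q2 q3 = 1)
  (q30 : sqdist q3 q0 = 1) (q02 : sqdist q0 q2 = 4^-1) (q13 : sqdist q1 q3 = 3).

Lemma triangle_dome_to_rhombus :
  domeable_seq [:: a; 2^-1 *: (a + b); b; 2^-1 *: (b + c); c] -> domeable_seq [:: q0; q1; q2; q3].
Proof.
have [x [xa xb xc]] := exists_point_sqdist_131 ab bc ca.
set m1 := 2^-1 *: (a + b); set m2 := 2^-1 *: (b + c).
have m1b : sqdist m1 b = 1 by rewrite sqdist_midpoint sqdist0 ab; lra.
have xm1 : sqdist x m1 = 1.
  by rewrite sqdistC sqdist_midpoint (sqdistC a) (sqdistC b) xa xb ab; lra.
have m2b : sqdist m2 b = 1 by rewrite sqdist_midpoint sqdist0 (sqdistC c) bc; lra.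
have xm2 : sqdist x m2 = 1.
  by rewrite sqdistC sqdist_midpoint (sqdistC b) (sqdistC c) xb xc bc; lra.
have m2a : sqdist m2 a = 3 / 2 by rewrite sqdist_midpoint (sqdistC b) ab ca bc; lra.
have m1m2 : sqdist m1 m2 = 4^-1.
  by rewrite sqdist_midpoint (sqdistC a) (sqdistC b) m2a m2b ab; lra.
move=> /(domeable_seq_rot 3) /=.
move=> /(domeable_seq_cone_path3 xm2 xc xa xm1) /(domeable_seq_rot 2) /=.
have [e [L [LL <-]]] : exists e (L : 'M[R]_3), L *m L^T = 1%:M /\
    map (fun y => e + y *m L) [:: m1; b; m2; x] = [:: q0; q1; q2; q3].
  apply: congruent4_rigid.
  - by rewrite m1b q01.
  - by rewrite m1m2 q02.
  - by rewrite sqdistC xm1 sqdistC q30.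
  - by rewrite sqdistC m2b q12.
  - by rewrite sqdistC xb q13.
  - by rewrite sqdistC xm2 q23.
  rewrite det_gram4 !sqdist0 (sqdistC b m1) (sqdistC m2 m1) (sqdistC b m2) (sqdistC b x).
  by rewrite (sqdistC m2 x) m1b m1m2 xm1 m2b xb xm2; apply: lt0r_neq0; lra.
exact: domeable_seq_isometry (sqdist_rigid e LL).
Qed.

Lemma rhombus_dome_to_triangle :
  domeable_seq [:: q0; q1; q2; q3] -> domeable_seq [:: a; 2^-1 *: (a + b); b; 2^-1 *: (b + c); c].
Proof.
have [x [xa xb xc]] := exists_point_sqdist_131 ab bc ca.
set a' := 2 *: q0 - q1; set c' := 2 *: q2 - q1.
have a'q0 : sqdist a' q0 = 1 by rewrite sqdist_reflect sqdist0 (sqdistC q1) q01; lra.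
have a'q1 : sqdist a' q1 = 4 by rewrite sqdist_reflect sqdist0 q01; lra.
have a'q2 : sqdist a' q2 = 3 / 2 by rewrite sqdist_reflect q01 q02 q12; lra.
have a'q3 : sqdist a' q3 = 1 by rewrite sqdist_reflect q01 (sqdistC q0) q30 q13; lra.
have c'q1 : sqdist c' q1 = 4 by rewrite sqdist_reflect sqdist0 (sqdistC q2) q12; lra.
have c'q2 : sqdist c' q2 = 1 by rewrite sqdist_reflect sqdist0 (sqdistC q2) q12; lra.
have c'q3 : sqdist c' q3 = 1 by rewrite sqdist_reflect (sqdistC q2) q12 q23 q13; lra.
have c'a' : sqdist c' a' = 1.
  by rewrite sqdist_reflect (sqdistC q2) q12 (sqdistC q2) a'q2 (sqdistC q1) a'q1; lra.
move=> /(domeable_seq_rot 3) /= /(domeable_seq_cone_edge a'q3 a'q0).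
move=> /(domeable_seq_rot 4) /= /(domeable_seq_cone_corner c'q2 c'q3 c'a').
move=> /(domeable_seq_rot 2) /=.
have [e [L [LL [ga gb gc _]]]] : exists e (L : 'M[R]_3), L *m L^T = 1%:M /\
    map (fun y => e + y *m L) [:: a'; q1; c'; q3] = [:: a; b; c; x].
  apply: congruent4_rigid.
  - by rewrite a'q1 ab.
  - by rewrite sqdistC c'a' sqdistC ca.
  - by rewrite a'q3 sqdistC xa.
  - by rewrite sqdistC c'q1 bc.
  - by rewrite q13 sqdistC xb.
  - by rewrite c'q3 sqdistC xc.
  rewrite det_gram4 !sqdist0 (sqdistC q1 a') (sqdistC q3 a') (sqdistC q1 c') (sqdistC q3 q1).
  by rewrite (sqdistC q3 c') a'q1 c'a' a'q3 c'q1 q13 c'q3; apply: lt0r_neq0; lra.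
have gq0 : e + q0 *m L = 2^-1 *: (a + b).
  by rewrite -{1}(midpoint_reflect q0 q1) rigid_midpoint ga gb.
have gq2 : e + q2 *m L = 2^-1 *: (b + c).
  by rewrite -{1}(midpoint_reflect q2 q1) rigid_midpoint gb gc addrC.
suff -> : [:: a; 2^-1 *: (a + b); b; 2^-1 *: (b + c); c] =
          map (fun y => e + y *m L) [:: a'; q0; q1; q2; c'].
  exact: domeable_seq_isometry (sqdist_rigid e LL).
by rewrite /= ga gq0 gb gq2 gc.
Qed.

End Proposition.

Theorem proposition5p2 (R : realType) (p : 'I_5 -> 'rV[R]_3) (q : 'I_4 -> 'rV[R]_3) :
  triangle221 p -> unit_rhombus (2^-1) (Num.sqrt 3) q ->
  (domeable p <-> domeable q).
Proof.
move=> [a [b [c [ab bc ca ->]]]] /unit_rhombus_sqdist[q01 q12 q23 q30 [q02 q13]].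
rewrite !domeableE // /mkseq /= !inordK //.
split; [exact: triangle_dome_to_rhombus | exact: rhombus_dome_to_triangle].
Qed.
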